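(* Let $n\ge 3$, let $C=\bigcap_{i=1}^{m}\{x\in\mathbb{R}^n:\langle x,v_i\rangle\ge 0\}$ be a strictly convex good cone with $C\setminus\{0\}\subset\{x_n>0\}$ satisfying the smoothness criterion, and let $M=P^{\lambda}=(T^n\times P)/\Delta$ (the good contact toric manifold associated with $C$) and $N=P^{\tilde\lambda}=(T^{n-1}\times P)/\widetilde{\Delta}$ (the symplectic toric manifold associated with $P$). Then $M$ is a principal $S^1$-bundle over $N$, with projection \[d:M\to N,\qquad [t,p]\mapsto[\tilde t,p],\] where for $t=(e^{i\theta_1},\dots,e^{i\theta_n})\in T^n$, $\tilde t=(e^{i\theta_1},\dots,e^{i\theta_{n-1}})\in T^{n-1}$ is $t$ with the last coordinate dropped.
   Context: A good cone in $\mathbb{R}^n$ is a rational polyhedral cone $C=\bigcap_{i=1}^m\{x:\langle x,v_i\rangle\ge 0\}$ (inequalities minimal), with facets $F_i$ and primitive inward normals $v_i=(v_{i1},\dots,v_{in})\in\mathbb{Z}^n$, such that for $0<l<n$ every codimension-$l$ face is the intersection of exactly $l$ facets and the corresponding normals generate a rank-$l$ direct summand of $\mathbb{Z}^n$; strictly convex means $C$ contains no line. $P=C\cap\{x_n=1\}$, identified with $\{y\in\mathbb{R}^{n-1}:\langle y,\tilde v_i\rangle\ge -v_{in}\}$ where $\tilde v_i=(v_{i1},\dots,v_{i,n-1})$; its facets are $\widetilde{F}_i=F_i\cap P$. Smoothness criterion: $P$ is a Delzant polytope in $\mathbb{R}^{n-1}$ and each $\tilde v_i$ is primitive in $\mathbb{Z}^{n-1}$.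 $\Delta$ is the equivalence relation on $T^n\times P$: $(g,p)\Delta(h,q)$ iff $p=q$ and $g^{-1}h$ lies in the closed subgroup of $T^n=\mathbb{R}^n/\mathbb{Z}^n$ generated by the images of the lines $\mathbb{R}v_i$, $p\in\widetilde{F}_i$; $\widetilde{\Delta}$ is the analogous relation on $T^{n-1}\times P$ using the vectors $\tilde v_i$ in $T^{n-1}=\mathbb{R}^{n-1}/\mathbb{Z}^{n-1}$. Here $P^{\lambda}$ is $T^n$-equivariantly homeomorphic to the good contact toric manifold associated with $C$, and $P^{\tilde\lambda}$ to the symplectic toric manifold with Delzant polytope $P$. The $S^1$ acting is the last circle factor $\{(1,\dots,1,e^{i\theta})\}\subset T^n$, acting on the first factor. *)

From HB Require Import structures.
From mathcomp Require Import all_boot all_order all_algebra.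
From mathcomp Require Import all_classical all_reals topology subtype_topology.
Set Implicit Arguments. Unset Strict Implicit. Unset Printing Implicit Defensive.
Import Order.TTheory GRing.Theory Num.Theory.
Import numFieldTopology.Exports.
Local Open Scope classical_set_scope.
Local Open Scope ring_scope.

Record cquot (T : Type) (r : T -> T -> Prop) := CQ {
  cq_set : set T ;
  cq_ex : exists x, cq_set = r x }.

HB.instance Definition _ (T : Type) (r : T -> T -> Prop) :=
  gen_eqMixin (cquot r).
HB.instance Definition _ (T : Type) (r : T -> T -> Prop) :=
  gen_choiceMixin (cquot r).

Definition cls (T : Type) (r : T -> T -> Prop) (x : T) : cquot r :=
  @CQ T r (r x) (ex_intro _ x erefl).

Definition crepr (T : Type) (r : T -> T -> Prop) (q : cquot r) : T :=
  projT1 (cid (cq_ex q)).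

Section quot_topology.
Context {T : topologicalType} (r : T -> T -> Prop).

Definition cquot_open (U : set (cquot r)) := open (@cls T r @^-1` U).

Lemma cquot_openT : cquot_open setT.
Proof. by rewrite /cquot_open preimage_setT; exact: openT. Qed.

Lemma cquot_openI : setI_closed cquot_open.
Proof. by move=> A B oA oB; exact: openI. Qed.

Lemma cquot_open_bigU (I : Type) (f : I -> set (cquot r)) :
  (forall i, cquot_open (f i)) -> cquot_open (\bigcup_i f i).
Proof. by move=> ofi; rewrite /cquot_open preimage_bigcup; apply: bigcup_open => i _; exact: ofi. Qed.

HB.instance Definition _ :=
  @isOpenTopological.Build (cquot r) cquot_open cquot_openT cquot_openI cquot_open_bigU.
End quot_topology.

Definition ipR (R : realType) (n : nat) (x y : 'rV[R]_n) : R :=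
  \sum_(j < n) x 0 j * y 0 j.

Definition toR (R : realType) (n : nat) (u : 'rV[int]_n) : 'rV[R]_n :=
  map_mx (fun z : int => z%:~R) u.
Arguments toR R {n} u.

Definition primitive (n : nat) (u : 'rV[int]_n) : Prop :=
  forall (c : int) (w : 'rV[int]_n), u = c *: w -> `|c| = 1.

Definition Zspan (n m : nat) (u : 'I_m -> 'rV[int]_n) (S : {set 'I_m}) :
  set 'rV[int]_n :=
  [set w | exists c : 'I_m -> int, w = \sum_(i in S) c i *: u i].

Definition Zfree (n m : nat) (u : 'I_m -> 'rV[int]_n) (S : {set 'I_m}) : Prop :=
  forall c : 'I_m -> int, \sum_(i in S) c i *: u i = 0 ->
    forall i, i \in S -> c i = 0.

Definition Zsubgroup (n : nat) (K : set 'rV[int]_n) : Prop :=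
  K 0 /\ forall x y, K x -> K y -> K (x - y).

Definition direct_summand (n : nat) (L : set 'rV[int]_n) : Prop :=
  exists K : set 'rV[int]_n, Zsubgroup K /\
    (forall x, L x -> K x -> x = 0) /\
    (forall w, exists a b, L a /\ K b /\ w = a + b).

Definition set_dim (R : realType) (n : nat) (F : set 'rV[R]_n) (d : nat) : Prop :=
  (exists A : 'M[R]_(d, n), (forall i, F (row i A)) /\ \rank A = d) /\
  (forall A : 'M[R]_(d.+1, n), (forall i, F (row i A)) -> (\rank A <= d)%N).

Definition cone (R : realType) (n m : nat) (v : 'I_m -> 'rV[int]_n) : set 'rV[R]_n :=
  [set x | forall i, 0 <= ipR x (toR R (v i))].
Arguments cone R {n m} v.

Definition facet (R : realType) (n m : nat) (v : 'I_m -> 'rV[int]_n) (i : 'I_m) :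
  set 'rV[R]_n :=
  [set x | cone R v x /\ ipR x (toR R (v i)) = 0].
Arguments facet R {n m} v i.

Definition face (R : realType) (n : nat) (C F : set 'rV[R]_n) : Prop :=
  exists w : 'rV[R]_n, (forall x, C x -> 0 <= ipR x w) /\
    F = [set x | C x /\ ipR x w = 0].

Definition minimal_ineqs (R : realType) (n m : nat) (v : 'I_m -> 'rV[int]_n) : Prop :=
  forall i, exists x : 'rV[R]_n,
    (forall j, j != i -> 0 <= ipR x (toR R (v j))) /\ ipR x (toR R (v i)) < 0.
Arguments minimal_ineqs R {n m} v.

Definition facets_containing (R : realType) (n m : nat) (v : 'I_m -> 'rV[int]_n)
  (F : set 'rV[R]_n) : {set 'I_m} :=
  [set i : 'I_m | `[< F `<=` facet R v i >]]%SET.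
Arguments facets_containing R {n m} v F.

Definition good_cone (R : realType) (n m : nat) (v : 'I_m -> 'rV[int]_n) : Prop :=
  (forall i, primitive (v i)) /\ minimal_ineqs R v /\
  forall (F : set 'rV[R]_n) (l : nat), (0 < l < n)%N ->
    face (cone R v) F -> set_dim F (n - l) ->
    let S := facets_containing R v F in
    #|S| = l /\ F = [set x | forall i, i \in S -> facet R v i x] /\
    Zfree v S /\ direct_summand (Zspan v S).
Arguments good_cone R {n m} v.

Definition strictly_convex (R : realType) (n : nat) (C : set 'rV[R]_n) : Prop :=
  forall x, C x -> C (- x) -> x = 0.

(* The polytope P = C ∩ {x_n = 1} in R^(n-1), n = k.+1                  *)
Definition vtil (k : nat) (u : 'rV[int]_k.+1) : 'rV[int]_k :=
  \row_(j < k) u 0 (widen_ord (leqnSn k) j).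

Definition dropR (R : realType) (k : nat) (a : 'rV[R]_k.+1) : 'rV[R]_k :=
  \row_(j < k) a 0 (widen_ord (leqnSn k) j).

Definition polyP (R : realType) (k m : nat) (v : 'I_m -> 'rV[int]_k.+1) :
  set 'rV[R]_k :=
  [set y | forall i, - ((v i 0 ord_max)%:~R) <= ipR y (toR R (vtil (v i)))].
Arguments polyP R {k m} v.

Definition facetP (R : realType) (k m : nat) (v : 'I_m -> 'rV[int]_k.+1) (i : 'I_m) :
  set 'rV[R]_k :=
  [set y | polyP R v y /\ ipR y (toR R (vtil (v i))) = - ((v i 0 ord_max)%:~R)].
Arguments facetP R {k m} v i.

Definition vertex (R : realType) (k : nat) (P : set 'rV[R]_k) (p : 'rV[R]_k) : Prop :=
  P p /\ forall (a b : 'rV[R]_k) (t : R), P a -> P b -> 0 < t < 1 ->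
    p = t *: a + (1 - t) *: b -> a = b.

Definition delzant (R : realType) (k m : nat) (v : 'I_m -> 'rV[int]_k.+1) : Prop :=
  let P := polyP R v in
  (exists B : R, forall y, P y -> forall j, `|y 0 j| <= B) /\
  (exists y : 'rV[R]_k, nbhs y P) /\
  forall p, vertex P p ->
    let S := [set i : 'I_m | `[< facetP R v i p >]]%SET in
    #|S| = k /\ Zfree (fun i => vtil (v i)) S /\
    Zspan (fun i => vtil (v i)) S = setT.
Arguments delzant R {k m} v.

Definition smoothness_criterion (R : realType) (k m : nat) (v : 'I_m -> 'rV[int]_k.+1)
  : Prop :=
  delzant R v /\ forall i, primitive (vtil (v i)).
Arguments smoothness_criterion R {k m} v.

Definition Zrel (R : realType) (n : nat) (a b : 'rV[R]_n) : Prop :=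
  exists z : 'rV[int]_n, b - a = toR R z.
Notation torus R n := (cquot (@Zrel R n)).

Definition Zrel1 (R : realType) (a b : R) : Prop := exists z : int, b - a = z%:~R.
Notation circle R := (cquot (@Zrel1 R)).
Definition cadd (R : realType) (s t : circle R) : circle R :=
  cls (@Zrel1 R) (crepr s + crepr t).
Definition czero (R : realType) : circle R := cls (@Zrel1 R) 0.

Definition Rsubgroup (R : realType) (n : nat) (A : set 'rV[R]_n) : Prop :=
  A 0 /\ forall x y, A x -> A y -> A (x - y).

(* preimage in R^n of the closed subgroup of T^n generated by the images of
   the lines R w_i (i in I): the smallest closed subgroup of R^n containing
   Z^n and these lines *)
Definition gen_closed_subgroup (R : realType) (n m : nat) (w : 'I_m -> 'rV[int]_n)
  (I : set 'I_m) : set 'rV[R]_n :=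
  \bigcap_(A in [set A : set 'rV[R]_n | closed A /\ Rsubgroup A /\
      (forall z, A (toR R z)) /\
      (forall i (t : R), I i -> A (t *: toR R (w i)))]) A.
Arguments gen_closed_subgroup R {n m} w I.

Definition PT (R : realType) (k m : nat) (v : 'I_m -> 'rV[int]_k.+1) :=
  set_type (polyP R v).
Arguments PT R {k m} v.

Definition Delta (R : realType) (k m : nat) (v : 'I_m -> 'rV[int]_k.+1)
  (gp hq : (torus R k.+1 * PT R v)%type) : Prop :=
  gp.2 = hq.2 /\
  gen_closed_subgroup R v [set i | facetP R v i (set_val gp.2)]
    (crepr hq.1 - crepr gp.1).
Arguments Delta R {k m} v gp hq.

Definition Deltatil (R : realType) (k m : nat) (v : 'I_m -> 'rV[int]_k.+1)
  (gp hq : (torus R k * PT R v)%type) : Prop :=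
  gp.2 = hq.2 /\
  gen_closed_subgroup R (fun i => vtil (v i)) [set i | facetP R v i (set_val gp.2)]
    (crepr hq.1 - crepr gp.1).
Arguments Deltatil R {k m} v gp hq.

Notation Mspace R v := (cquot (Delta R v)).
Notation Nspace R v := (cquot (Deltatil R v)).

Definition dproj (R : realType) (k m : nat) (v : 'I_m -> 'rV[int]_k.+1)
  (x : Mspace R v) : Nspace R v :=
  let tp := crepr x in
  cls (Deltatil R v) (cls (@Zrel R k) (dropR (crepr tp.1)), tp.2).

Definition elast (R : realType) (k : nat) : 'rV[R]_k.+1 :=
  \row_(j < k.+1) (j == ord_max)%:R.
Arguments elast R k.

Definition circle_act (R : realType) (k m : nat) (v : 'I_m -> 'rV[int]_k.+1)
  (s : circle R) (x : Mspace R v) : Mspace R v :=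
  let tp := crepr x in
  cls (Delta R v) (cls (@Zrel R k.+1) (crepr tp.1 + crepr s *: elast R k), tp.2).

Definition principal_bundle (G E B : topologicalType)
  (gadd : G -> G -> G) (g0 : G) (act : G -> E -> E) (p : E -> B) : Prop :=
  continuous (fun gx : G * E => act gx.1 gx.2) /\
  (forall x, act g0 x = x) /\
  (forall g h x, act (gadd g h) x = act g (act h x)) /\
  continuous p /\ (forall b, exists x, p x = b) /\
  (forall g x, p (act g x) = p x) /\
  forall b : B, exists U : set B, open U /\ U b /\
    exists (phi : E -> B * G) (psi : B * G -> E),
      {within p @^-1` U, continuous phi} /\
      {within U `*` setT, continuous psi} /\
      (forall x, U (p x) ->
         (phi x).1 = p x /\ psi (phi x) = x /\
         forall g, phi (act g x) = ((phi x).1, gadd g (phi x).2)) /\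
      (forall z, U z.1 -> p (psi z) = z.1 /\ phi (psi z) = z).

From Pilot Require Import Defs.
From HB Require Import structures.
From mathcomp Require Import all_boot all_order all_algebra.
From mathcomp Require Import all_classical all_reals topology subtype_topology.
From mathcomp Require Import normedtype derive.
From mathcomp Require Import ring lra zify unstable.
Import Order.TTheory GRing.Theory Num.Theory.
Import numFieldTopology.Exports numFieldNormedType.Exports.
Local Open Scope classical_set_scope.
Local Open Scope ring_scope.
Set Implicit Arguments. Unset Strict Implicit. Unset Printing Implicit Defensive.

(* A point of M is a class [u, p] with u in R^n; the fibre through p is
   R^n / G_p, where G_p is the closed subgroup generated by Z^n and the lines
   R v_i of the facets through p.  Dropping the last coordinate maps G_p into
   the corresponding group for N, so d is well defined, and R e_n / Z e_n
   acts along its fibres.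
   For local triviality near [u, p], let q maximise |y|^2 on the face of P
   through p: q is a vertex lying on every facet through p.  By the Delzant
   condition the normals ~v_s(1), ..., ~v_s(k) at q form a Z-basis of Z^k, so
   u = sum_i c_i v_s(i) + a e_n with c the coordinates of ~u in that basis.
   Over the open set of points whose facets all pass through q, the class of
   a modulo Z is invariant under G_p, and [u, p] |-> ([~u, p], [a]) is an
   equivariant trivialization. *)

Section class_quotient.
Variables (T : Type) (r : T -> T -> Prop).

Lemma cls_crepr (q : cquot r) : cls r (crepr q) = q.
Proof.
rewrite /crepr; case: (cid (cq_ex q)) => x /= hx.
case: q hx => s e /= hx; subst s; congr CQ; exact: Prop_irrelevance.
Qed.

Lemma cls_surj (q : cquot r) : exists x, cls r x = q.
Proof. by exists (crepr q); exact: cls_crepr. Qed.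

Hypothesis r_refl : forall x, r x x.

Lemma rel_crepr_cls x : r x (crepr (cls r x)).
Proof. by rewrite /crepr; case: (cid (cq_ex (cls r x))) => y /= ->. Qed.

Lemma cls_rel x y : cls r x = cls r y -> r x y.
Proof. by move=> /(congr1 (@cq_set _ _)) /= ->. Qed.

Hypotheses (r_sym : forall x y, r x y -> r y x)
  (r_trans : forall x y z, r x y -> r y z -> r x z).

Lemma eq_cls x y : r x y -> cls r x = cls r y.
Proof.
move=> rxy; rewrite /cls; have e : r x = r y.
  apply/funext => z; apply/propext.
  by split => h; [exact: r_trans (r_sym rxy) h|exact: r_trans rxy h].
move: (ex_intro _ x _) (ex_intro _ y _); rewrite e => e1 e2.
by congr CQ; exact: Prop_irrelevance.
Qed.
End class_quotient.

Lemma cquot_openE (T : topologicalType) (r : T -> T -> Prop) (U : set (cquot r)) :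
  open U = open (cls r @^-1` U).
Proof. by []. Qed.

Lemma cls_continuous (T : topologicalType) (r : T -> T -> Prop) : continuous (cls r).
Proof. by apply/continuousP => A oA; rewrite -cquot_openE. Qed.

Section maps.
Variables X Y Z : topologicalType.

Lemma comp_continuous (f : X -> Y) (g : Y -> Z) :
  continuous f -> continuous g -> continuous (fun x => g (f x)).
Proof. by move=> cf cg x; apply: continuous_comp; [exact: cf|exact: cg]. Qed.

Lemma pair_continuous (f : X -> Y) (g : X -> Z) :
  continuous f -> continuous g -> continuous (fun x => (f x, g x)).
Proof. by move=> cf cg x; apply: cvg_pair; [exact: cf|exact: cg]. Qed.

Lemma fst_continuous : continuous (@fst X Y).
Proof. by move=> [x y]; exact: cvg_fst. Qed.

Lemma snd_continuous : continuous (@snd X Y).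
Proof. by move=> [x y]; exact: cvg_snd. Qed.

Lemma nbhs_prodP (a : X) (b : Y) (W : set (X * Y)) :
  nbhs (a, b) W <-> exists A B, nbhs a A /\ nbhs b B /\ A `*` B `<=` W.
Proof.
split; first by case=> [[A B]] /= [Aa Bb] ABW; exists A, B.
by case=> A [B [Aa [Bb ABW]]]; exists (A, B).
Qed.
End maps.

Definition open_map (X Y : topologicalType) (f : X -> Y) :=
  forall O, open O -> open (f @` O).

Definition quotient_map (X Y : topologicalType) (h : X -> Y) :=
  forall W, open (h @^-1` W) -> open W.

Lemma open_map_id (X : topologicalType) : open_map (@id X).
Proof. by move=> O oO; rewrite image_id. Qed.

Lemma open_mapX (X X' Y Y' : topologicalType) (f : X -> X') (g : Y -> Y') :
  open_map f -> open_map g -> open_map (fun z : X * Y => (f z.1, g z.2)).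
Proof.
move=> hf hg O oO; rewrite openE => _ [[a b] Oab <-].
have := oO; rewrite openE => /(_ _ Oab) /nbhs_prodP [A [B [Aa [Bb ABO]]]].
apply/nbhs_prodP; exists (f @` A°), (g @` B°); split.
  apply: open_nbhs_nbhs; split; first by apply: hf; exact: open_interior.
  by exists a => //; exact: nbhs_singleton (nbhs_interior Aa).
split.
  apply: open_nbhs_nbhs; split; first by apply: hg; exact: open_interior.
  by exists b => //; exact: nbhs_singleton (nbhs_interior Bb).
move=> [x y] /= [[a' Aa' <-] [b' Bb' <-]]; exists (a', b') => //.
by apply: ABO; split; apply: interior_subset.
Qed.

Lemma quotient_map_open_surj (X Y : topologicalType) (h : X -> Y) :
  open_map h -> (forall y, exists x, h x = y) -> quotient_map h.
Proof.
move=> oh sh W oW; suff -> : W = h @` (h @^-1` W) by exact: oh.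
apply/seteqP; split => [y Wy|y [x Wx <-] //].
by have [x hx] := sh y; exists x => //; rewrite /preimage /= hx.
Qed.

Lemma quotient_map_cls (T : topologicalType) (r : T -> T -> Prop) :
  quotient_map (cls r).
Proof. by move=> W; rewrite cquot_openE. Qed.

Lemma quotient_map_comp (X Y Z : topologicalType) (h1 : X -> Y) (h2 : Y -> Z) :
  quotient_map h1 -> quotient_map h2 -> quotient_map (h2 \o h1).
Proof. by move=> q1 q2 W oW; apply: q2; apply: q1. Qed.

(* Whitehead's lemma for the locally compact factor R: around (s0, b0) in W
   take a ball times the set of b with K x {b} in W, K a compact interval;
   the tube lemma for K shows that the preimage of this set is open. *)
Lemma quotient_map_idX (R : realType) (Y B : topologicalType) (q : Y -> B) :
  quotient_map q -> (forall b, exists y, q y = b) ->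
  quotient_map (fun z : R * Y => (z.1, q z.2)).
Proof.
move=> qq qs W oO; rewrite openE => -[s0 b0] Wsb.
have [y0 qy0] := qs b0.
set O := (fun z : R * Y => (z.1, q z.2)) @^-1` W in oO.
have Osy : O (s0, y0) by rewrite /O /preimage /= qy0.
have := oO; rewrite openE => /(_ _ Osy) /nbhs_prodP [A [V [As0 [Vy0 AVO]]]].
have [e /= e0 eA] := (nbhs_ballP _ _).1 As0.
pose K := `[s0 - e / 2, s0 + e / 2]%classic.
pose Ab := [set b | forall s, K s -> W (s, b)].
have oAb : open Ab.
  apply: qq; rewrite openE => y1 Ky1.
  have cK : compact K by exact: segment_compact.
  have hcov : forall s, K s -> \forall x' \near s & y \near nbhs y1, O (x', y).
    move=> s Ks; have : open_nbhs (s, y1) O by split => //; exact: Ky1 s Ks.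
    by move/open_nbhs_nbhs.
  have := (compact_near_coveringP K).1 cK Y (nbhs y1) (fun y s => O (s, y)) _ hcov.
  move=> h; rewrite /interior; apply: filterS (h _) => y Ky s Ks; exact: Ky s Ks.
have Ab0 : Ab b0.
  move=> s Ks; rewrite -qy0; suff : O (s, y0) by [].
  apply: AVO; split => /=; last exact: nbhs_singleton.
  apply: eA; rewrite /ball /=; move: Ks; rewrite /K /= in_itv /= => /andP[h1 h2].
  by rewrite ltr_norml; apply/andP; split; lra.
apply/nbhs_prodP; exists (ball s0 (e / 2)), Ab; split.
  by apply: nbhsx_ballx; rewrite divr_gt0.
split; first by apply: open_nbhs_nbhs; split.
move=> [s b] /= [sb Abb]; apply: Abb; rewrite /K /= in_itv /=.
move: sb; rewrite /ball /= ltr_norml => /andP[h1 h2].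
by apply/andP; split; lra.
Qed.

Lemma quotient_map_Xid (R : realType) (Y B : topologicalType) (q : Y -> B) :
  quotient_map q -> (forall b, exists y, q y = b) ->
  quotient_map (fun z : Y * R => (q z.1, z.2)).
Proof.
move=> qq qs W oW.
have -> : W = (@swap B R) @^-1` ((@swap R B) @^-1` W) by apply/seteqP; split => -[].
apply: (continuousP _).1; first exact: swap_continuous.
apply: (quotient_map_idX qq qs).
have -> : (fun z : R * Y => (z.1, q z.2)) @^-1` ((@swap R B) @^-1` W) =
   (@swap R Y) @^-1` ((fun z : Y * R => (q z.1, z.2)) @^-1` W).
  by apply/seteqP; split => -[].
by apply: (continuousP _).1; first exact: swap_continuous.
Qed.

Lemma continuous_quotient (X Y Z : topologicalType) (h : X -> Y) (f : Y -> Z)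
  (g : X -> Z) :
  quotient_map h -> continuous g -> (forall x, f (h x) = g x) -> continuous f.
Proof.
move=> qh cg fg; apply/continuousP => Xs oX; apply: qh.
have -> : h @^-1` (f @^-1` Xs) = g @^-1` Xs.
  by apply/seteqP; split => x; rewrite /preimage /= fg.
exact: (continuousP _).1 cg _ oX.
Qed.

Lemma continuous_within_quotient (X Y Z : topologicalType) (h : X -> Y)
  (f : Y -> Z) (A : set Y) (g : X -> Z) :
  quotient_map h -> continuous h -> open A -> continuous g ->
  (forall x, A (h x) -> f (h x) = g x) ->
  {within A, continuous f}.
Proof.
move=> qh ch oA cg fg; rewrite continuous_open_subspace //.
apply/continuous_inP => // Xs oX; apply: qh.
have -> : h @^-1` (A `&` f @^-1` Xs) = h @^-1` A `&` g @^-1` Xs.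
  apply/seteqP; split => x [Ax hx]; split => //.
    by rewrite /preimage /= -fg.
  by rewrite /preimage /= fg.
by apply: openI; [exact: (continuousP _).1 ch _ oA|exact: (continuousP _).1 cg _ oX].
Qed.

Section coset_quotient.
Variables (R : realType) (V : normedModType R) (S : set V).
Hypotheses (S0 : S 0) (SB : forall a b, S a -> S b -> S (a - b)).

Definition coset_rel (a b : V) : Prop := S (b - a).

Let SN a : S a -> S (- a).
Proof. by move=> Sa; rewrite -sub0r; apply: SB. Qed.

Let SD a b : S a -> S b -> S (a + b).
Proof. by move=> Sa Sb; rewrite -[b]opprK; apply: SB => //; apply: SN. Qed.

Lemma coset_rel_refl x : coset_rel x x. Proof. by rewrite /coset_rel subrr. Qed.

Lemma coset_rel_sym x y : coset_rel x y -> coset_rel y x.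
Proof. by rewrite /coset_rel => /SN; rewrite opprB. Qed.

Lemma coset_rel_trans x y z : coset_rel x y -> coset_rel y z -> coset_rel x z.
Proof. by rewrite /coset_rel => h1 h2; have := SD h2 h1; rewrite addrA subrK. Qed.

(* The saturation of O is the union of its translates by S. *)
Lemma open_map_cls_coset : open_map (cls coset_rel).
Proof.
move=> O oO; rewrite cquot_openE.
have -> : cls coset_rel @^-1` (cls coset_rel @` O) =
    \bigcup_(w in S) ((fun x => x - w) @^-1` O).
  apply/seteqP; split => x /=.
    case=> y Oy /(cls_rel coset_rel_refl) => hxy; exists (x - y) => //.
    by rewrite /= opprB addrC subrK.
  case=> w Sw Oxw; exists (x - w) => //; apply: eq_cls.
  - exact: coset_rel_sym.
  - exact: coset_rel_trans.
  by rewrite /coset_rel opprB addrC subrK.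
apply: bigcup_open => w _; move: oO; apply: (continuousP _).1.
by move=> x; apply: continuousB => //; exact: cst_continuous.
Qed.
End coset_quotient.

Section lattice.
Variable R : realType.

Lemma toR0 n : toR R (0 : 'rV[int]_n) = 0.
Proof. by apply/matrixP => i j; rewrite !mxE. Qed.

Lemma toRB n (a b : 'rV[int]_n) : toR R (a - b) = toR R a - toR R b.
Proof. by apply/matrixP => i j; rewrite !mxE intrB. Qed.

Lemma toRZ n (c : int) (a : 'rV[int]_n) : toR R (c *: a) = c%:~R *: toR R a.
Proof. by apply/matrixP => i j; rewrite !mxE intrM. Qed.

Definition lattice n : set 'rV[R]_n := [set w | exists z, w = toR R z].
Definition integers : set R := [set x | exists z : int, x = z%:~R].

Lemma integers0 : integers 0. Proof. by exists 0. Qed.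

Lemma integersB a b : integers a -> integers b -> integers (a - b).
Proof. by move=> [z ->] [w ->]; exists (z - w); rewrite intrB. Qed.

Lemma closed_integers : closed integers.
Proof.
rewrite -openC openE => x nZx.
have /andP[fx xf1] := floor_itv x; set f := Num.floor x in fx xf1.
have flt : f%:~R < x.
  by rewrite lt_neqAle fx andbT; apply/eqP => e; apply: nZx; exists f.
apply/nbhs_ballP; exists (Num.min (x - f%:~R) ((f + 1)%:~R - x)).
  by rewrite /= lt_min !subr_gt0 flt xf1.
move=> y; rewrite /ball /= lt_min => /andP[h1 h2] [z yz]; subst y.
move: h1 h2; rewrite !ltr_norml => /andP[a1 a2] /andP[b1 b2].
have c1 : f%:~R < z%:~R :> R by lra.
have c2 : z%:~R < (f + 1)%:~R :> R by lra.
rewrite ltr_int in c1; rewrite ltr_int in c2; lia.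
Qed.

Lemma open_map_torus n : open_map (cls (@Zrel R n)).
Proof.
have lattice0 : @lattice n 0 by exists 0; rewrite toR0.
have latticeB a b : @lattice n a -> @lattice n b -> @lattice n (a - b).
  by move=> [z ->] [w ->]; exists (z - w); rewrite toRB.
exact: (@open_map_cls_coset R _ (@lattice n) lattice0 latticeB).
Qed.

Lemma open_map_circle : open_map (cls (@Zrel1 R)).
Proof. exact: (@open_map_cls_coset R R^o integers integers0 integersB). Qed.

Lemma Zrel_refl n (u : 'rV[R]_n) : Zrel u u.
Proof. by exists 0; rewrite subrr toR0. Qed.

Lemma crepr_cls_torus n (u : 'rV[R]_n) :
  exists z, crepr (cls (@Zrel R n) u) = u + toR R z.
Proof.
by have [z hz] := rel_crepr_cls (@Zrel_refl n) u; exists z; rewrite -hz addrC subrK.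
Qed.

Lemma Zrel1_refl (u : R) : Zrel1 u u.
Proof. by exists 0; rewrite subrr. Qed.

Lemma crepr_cls_circle (u : R) : exists z : int, crepr (cls (@Zrel1 R) u) = u + z%:~R.
Proof.
by have [z hz] := rel_crepr_cls Zrel1_refl u; exists z; rewrite -hz addrC subrK.
Qed.

Lemma eq_cls_circle (a b : R) : integers (b - a) -> cls (@Zrel1 R) a = cls (@Zrel1 R) b.
Proof.
move=> [z h]; apply: eq_cls; last by exists z.
- by move=> x y [w e]; exists (- w); rewrite intrN -e opprB.
- by move=> x y t [w1 e1] [w2 e2]; exists (w1 + w2); rewrite intrD -e1 -e2; lra.
Qed.

Lemma cadd_cls (a b : R) :
  cadd (cls (@Zrel1 R) a) (cls (@Zrel1 R) b) = cls (@Zrel1 R) (a + b).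
Proof.
rewrite /cadd; have [z1 ->] := crepr_cls_circle a; have [z2 ->] := crepr_cls_circle b.
apply: eq_cls_circle; exists (- z1 - z2); rewrite intrB intrN; lra.
Qed.
End lattice.
Arguments lattice : clear implicits.
Arguments integers : clear implicits.

Section gen_closed_subgroup.
Variables (R : realType) (n m : nat) (w : 'I_m -> 'rV[int]_n) (I : set 'I_m).
Local Notation G := (gen_closed_subgroup R w I).

Lemma gcs_min (H : set 'rV[R]_n) : closed H -> Rsubgroup H ->
  (forall z, H (toR R z)) -> (forall i (t : R), I i -> H (t *: toR R (w i))) ->
  G `<=` H.
Proof. by move=> cH sH zH lH x Gx; apply: Gx; split. Qed.

Lemma gcs_lattice z : G (toR R z). Proof. by move=> A [_ [_ [zA _]]]. Qed.

Lemma gcs_line i t : I i -> G (t *: toR R (w i)).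
Proof. by move=> Ii A [_ [_ [_ lA]]]; apply: lA. Qed.

Lemma gcs0 : G 0. Proof. by move=> A [_ [[A0 _] _]]. Qed.

Lemma gcsB a b : G a -> G b -> G (a - b).
Proof. by move=> Ga Gb A hA; case: (hA) => _ [[_ sA] _]; apply: sA; [apply: Ga|apply: Gb]. Qed.

Lemma gcsN a : G a -> G (- a).
Proof. by move=> Ga; rewrite -sub0r; apply: gcsB => //; exact: gcs0. Qed.

Lemma gcsD a b : G a -> G b -> G (a + b).
Proof. by move=> Ga Gb; rewrite -[b]opprK; apply: gcsB => //; apply: gcsN. Qed.

Lemma closed_gcs : closed G.
Proof. by apply: closed_bigI => A [cA _]. Qed.
End gen_closed_subgroup.

Section inner_product.
Variables (R : realType) (n : nat).

Lemma ipRD (a b w : 'rV[R]_n) : ipR (a + b) w = ipR a w + ipR b w.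
Proof. by rewrite /ipR -big_split /=; apply: eq_bigr => j _; rewrite mxE mulrDl. Qed.

Lemma ipRZ (t : R) (a w : 'rV[R]_n) : ipR (t *: a) w = t * ipR a w.
Proof. by rewrite /ipR mulr_sumr; apply: eq_bigr => j _; rewrite mxE mulrA. Qed.

Lemma sum_continuous (T : topologicalType) (I : finType) (f : I -> T -> R) :
  (forall i, continuous (f i)) -> continuous (fun x => \sum_i f i x).
Proof.
move=> cf; suff : forall s : seq I, continuous (fun x => \sum_(i <- s) f i x) by apply.
elim=> [|i s IH]; first by under eq_fun do rewrite big_nil; exact: cst_continuous.
by under eq_fun do rewrite big_cons; move=> x; apply: continuousD; [exact: cf|exact: IH].
Qed.

Lemma continuous_mx (T : topologicalType) a b (f : T -> 'M[R]_(a, b)) :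
  (forall i j, continuous (fun x => f x i j)) -> continuous f.
Proof.
move=> cf x A [Q /= Qn QA]; apply: (filterS QA).
have : forall i, \forall y \near x, forall j, Q i j (f y i j).
  by move=> i; apply: filter_forall => j; exact: cf i j x _ (Qn i j).
by move/filter_forall.
Qed.

Lemma ipR_continuous (w : 'rV[R]_n) : continuous (fun a : 'rV[R]_n => ipR a w).
Proof.
apply: sum_continuous => j x; apply: continuousM; first exact: coord_continuous.
exact: cst_continuous.
Qed.

Lemma ipRxx_continuous : continuous (fun a : 'rV[R]_n => ipR a a).
Proof. by apply: sum_continuous => j x; apply: continuousM; exact: coord_continuous. Qed.

Lemma ipRxx_le0 (a : 'rV[R]_n) : ipR a a <= 0 -> a = 0.
Proof.
move=> h; have h0 : ipR a a = 0.
  apply/eqP; rewrite eq_le h /ipR sumr_ge0 // => j _; exact: sqr_ge0.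
apply/matrixP => i j; rewrite ord1 mxE.
have /eqP := h0; rewrite /ipR psumr_eq0; last by move=> l _; exact: sqr_ge0.
move=> /allP /(_ j (mem_index_enum _)) /implyP /(_ isT).
by rewrite mulf_eq0 orbb => /eqP.
Qed.

(* |.|^2 is strictly convex: a maximiser on F is an extreme point of F. *)
Lemma ipRxx_max_extreme (F : set 'rV[R]_n) (q a b : 'rV[R]_n) (t : R) :
  (forall y, F y -> ipR y y <= ipR q q) -> F a -> F b -> 0 < t < 1 ->
  q = t *: a + (1 - t) *: b -> a = b.
Proof.
move=> qmax Fa Fb /andP[t0 t1] qe.
have defect : t * ipR a a + (1 - t) * ipR b b - ipR q q =
    t * (1 - t) * ipR (a - b) (a - b).
  by rewrite qe /ipR !mulr_sumr -big_split -sumrB /=; apply: eq_bigr => j _; rewrite !mxE; ring.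
apply/eqP; rewrite -subr_eq0; apply/eqP; apply: ipRxx_le0.
have tt : 0 < t * (1 - t) by rewrite mulr_gt0 // subr_gt0.
rewrite -(pmulr_rle0 _ tt) -defect.
have h1 : t * ipR a a <= t * ipR q q by rewrite ler_wpM2l ?qmax // ltW.
have h2 : (1 - t) * ipR b b <= (1 - t) * ipR q q.
  by rewrite ler_wpM2l ?qmax // subr_ge0 ltW.
lra.
Qed.
End inner_product.

Section polytope.
Variables (R : realType) (k m : nat) (v : 'I_m -> 'rV[int]_k.+1).
Local Notation P := (Defs.polyP R v).
Local Notation c i := (- ((v i 0 ord_max)%:~R) : R).

Lemma closed_polyP : closed P.
Proof.
have -> : P = \bigcap_(i in setT)
   ((fun y => ipR y (toR R (vtil (v i)))) @^-1` [set x | c i <= x]).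
  by apply/seteqP; split => y hy i; [move=> _; exact: hy|exact: hy].
apply: closed_bigI => i _; apply: preimage_closed; last exact: closed_ge.
by move=> y _; apply: ipR_continuous.
Qed.

(* The vertex is a maximiser of |y|^2 on the face of P through p. *)
Lemma exists_vertex_on_facets (B : R) :
  (forall y, P y -> forall j, `|y 0 j| <= B) -> forall p, P p ->
  exists q, vertex P q /\ forall i, facetP R v i p -> facetP R v i q.
Proof.
move=> hB p Pp.
pose F := [set y | P y /\ forall i, facetP R v i p -> ipR y (toR R (vtil (v i))) <= c i].
have cF : closed F.
  have -> : F = P `&` \bigcap_(i in [set i | facetP R v i p])
     ((fun y => ipR y (toR R (vtil (v i)))) @^-1` [set x | x <= c i]).
    by apply/seteqP; split => y [h1 h2]; split => //.
  apply: closedI; first exact: closed_polyP.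
  apply: closed_bigI => i _; apply: preimage_closed; last exact: closed_le.
  by move=> y _; apply: ipR_continuous.
have compF : compact F.
  apply: (subclosed_compact cF).
    by apply: (@rV_compact R k (fun _ : 'I_k => `[- B, B]%classic)) => _; exact: segment_compact.
  move=> y [Py _] j /=; rewrite in_itv /= -ler_norml; exact: hB.
have F0 : F !=set0 by exists p; split => // i [_ ->].
have cf : {within F, continuous (fun a : 'rV[R]_k => ipR a a)}.
  by apply: continuous_subspaceT; exact: ipRxx_continuous.
have [q /set_mem [Pq qfac] qmax] := EVT_max_rV F0 compF cf.
have tight i : facetP R v i p -> ipR q (toR R (vtil (v i))) = c i.
  by move=> hi; apply/eqP; rewrite eq_le qfac //=; exact: Pq.
exists q; split; last by move=> i hi; split => //; apply: tight.
split => // a b t Pa Pb t01 qe.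
have Fab : F a /\ F b.
  have key i : facetP R v i p -> ipR a (toR R (vtil (v i))) <= c i /\
                                 ipR b (toR R (vtil (v i))) <= c i.
    move=> hi; have := tight i hi; rewrite qe ipRD !ipRZ.
    have := Pa i; have := Pb i; case/andP: t01 => t0 t1 h1 h2 h3; split; nra.
  by split; split => // i hi; have [] := key i hi.
by apply: (ipRxx_max_extreme _ Fab.1 Fab.2 t01 qe) => y Fy; apply: qmax; exact: mem_set.
Qed.
End polytope.

Section drop_last.
Variables (R : realType) (k : nat).

Lemma dropRD (a b : 'rV[R]_k.+1) : dropR (a + b) = dropR a + dropR b.
Proof. by apply/matrixP => i j; rewrite !mxE. Qed.

Lemma dropRZ (s : R) (a : 'rV[R]_k.+1) : dropR (s *: a) = s *: dropR a.
Proof. by apply/matrixP => i j; rewrite !mxE. Qed.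

Lemma dropRB (a b : 'rV[R]_k.+1) : dropR (a - b) = dropR a - dropR b.
Proof. by apply/matrixP => i j; rewrite !mxE. Qed.

Lemma dropR0 : dropR (0 : 'rV[R]_k.+1) = 0.
Proof. by apply/matrixP => i j; rewrite !mxE. Qed.

Lemma dropR_toR (z : 'rV[int]_k.+1) : dropR (toR R z) = toR R (vtil z).
Proof. by apply/matrixP => i j; rewrite !mxE. Qed.

Lemma dropR_elast : dropR (elast R k) = 0.
Proof.
apply/matrixP => i j; rewrite !mxE; case: eqP => // /(congr1 val) /= e.
by have := ltn_ord j; rewrite e ltnn.
Qed.

Lemma dropR_continuous : continuous (@dropR R k).
Proof.
apply: continuous_mx => i j; rewrite /dropR; under eq_fun do rewrite mxE.
exact: coord_continuous.
Qed.

Lemma elast_toR : elast R k = toR R (\row_(j < k.+1) ((j == ord_max) : nat)%:Z).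
Proof. by apply/matrixP => i j; rewrite !mxE; case: eqP. Qed.

Lemma gcs_dropR (m : nat) (v : 'I_m -> 'rV[int]_k.+1) (J : set 'I_m) t :
  gen_closed_subgroup R v J t ->
  gen_closed_subgroup R (fun i => vtil (v i)) J (dropR t).
Proof.
pose H x := gen_closed_subgroup R (fun i => vtil (v i)) J (dropR x).
apply: (@gcs_min R _ _ v J H) => [|||i s Ji].
- by apply: preimage_closed; [move=> x _; exact: dropR_continuous|exact: closed_gcs].
- split; first by rewrite /H dropR0; exact: gcs0.
  by move=> x y Hx Hy; rewrite /H dropRB; exact: gcsB.
- by move=> z; rewrite /H dropR_toR; exact: gcs_lattice.
- by rewrite /H dropRZ dropR_toR; exact: gcs_line.
Qed.
End drop_last.

Lemma big_cast_ord (V : nmodType) (n0 n1 : nat) (e : n0 = n1) (F : 'I_n0 -> V) :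
  \sum_(l < n0) F l = \sum_(l < n1) F (cast_ord (esym e) l).
Proof. by subst n1; apply: eq_bigr => l _; congr F; apply: val_inj. Qed.

Lemma enum_Zbasis (k m : nat) (v : 'I_m -> 'rV[int]_k.+1) (S : {set 'I_m}) :
  #|S| = k -> Zspan (fun i => vtil (v i)) S = setT ->
  exists (s : 'I_k -> 'I_m) (C : 'M[int]_k),
    (forall j, j \in S -> exists i, s i = j) /\
    C *m (\matrix_(i, j) vtil (v (s i)) 0 j) = 1%:M.
Proof.
move=> hS hspan.
pose s (i : 'I_k) : 'I_m := enum_val (cast_ord (esym hS) i).
have hc j : exists c : 'I_m -> int,
    row j (1%:M : 'M[int]_k) = \sum_(i in S) c i *: vtil (v i).
  by have : Zspan (fun i => vtil (v i)) S (row j 1%:M) by rewrite hspan.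
have [c hc'] := choice hc.
exists s, (\matrix_(j, l) c j (s l)); split.
  move=> j jS; exists (cast_ord hS (enum_rank_in jS j)).
  rewrite /s; have -> : cast_ord (esym hS) (cast_ord hS (enum_rank_in jS j)) =
    enum_rank_in jS j by apply: val_inj.
  exact: enum_rankK_in.
apply/row_matrixP => j; rewrite row_mul mulmx_sum_row hc' [RHS]big_enum_val (big_cast_ord hS).
apply: eq_bigr => l _; rewrite mxE; congr (_ *: _); first by rewrite mxE.
by apply/matrixP => a b; rewrite ord1 !mxE.
Qed.

Lemma entryB (V : zmodType) a b (A B : 'M[V]_(a, b)) i j : (A - B) i j = A i j - B i j.
Proof. by rewrite !mxE. Qed.

Section vertex_coordinates.
Variables (R : realType) (k m : nat) (v : 'I_m -> 'rV[int]_k.+1).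
Variables (s : 'I_k -> 'I_m) (C : 'M[int]_k).
Hypothesis hC : C *m (\matrix_(i, j) vtil (v (s i)) 0 j) = 1%:M.

Local Notation intmx A := (map_mx (fun z : int => z%:~R : R) A).
Local Notation Bs := (\matrix_(i, j) vtil (v (s i)) 0 j : 'M[int]_k).
Local Notation Vs := (\matrix_(i, j) v (s i) 0 j : 'M[int]_(k, k.+1)).

Definition coords (y : 'rV[R]_k) : 'rV[R]_k := y *m intmx C.

Definition fibre_coord (t : 'rV[R]_k.+1) : R :=
  t 0 ord_max - (coords (dropR t) *m intmx Vs) 0 ord_max.

Definition lift_coords (y : 'rV[R]_k) (a : R) : 'rV[R]_k.+1 :=
  coords y *m intmx Vs + a *: elast R k.

Lemma intmx_CB : intmx C *m intmx Bs = 1%:M.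
Proof. by rewrite -map_mxM hC map_mx1. Qed.

Lemma intmx_BC : intmx Bs *m intmx C = 1%:M.
Proof. by rewrite -map_mxM mulmx1C // map_mx1. Qed.

Lemma dropR_lift_coords y a : dropR (lift_coords y a) = y.
Proof.
rewrite /lift_coords dropRD dropRZ dropR_elast scaler0 addr0.
have -> : dropR (coords y *m intmx Vs) = coords y *m intmx Bs.
  by apply/matrixP => i j; rewrite ord1 !mxE; apply: eq_bigr => l _; rewrite !mxE.
by rewrite /coords -mulmxA intmx_CB mulmx1.
Qed.

Lemma lift_coords_max y a :
  lift_coords y a 0 ord_max = (coords y *m intmx Vs) 0 ord_max + a.
Proof.
have e1 : elast R k 0 ord_max = 1 by rewrite mxE eqxx.
by rewrite /lift_coords [LHS]mxE [X in _ + X]mxE e1 mulr1.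
Qed.

Lemma fibre_coord_lift y a : fibre_coord (lift_coords y a) = a.
Proof. by rewrite /fibre_coord dropR_lift_coords lift_coords_max addrAC subrr add0r. Qed.

Lemma lift_coordsE t : lift_coords (dropR t) (fibre_coord t) = t.
Proof.
apply/matrixP => i j; rewrite ord1 {i}.
case: (ltnP j k) => hj.
  have -> : j = widen_ord (leqnSn k) (Ordinal hj) by apply: val_inj.
  have := congr1 (fun M : 'rV[R]_k => M 0 (Ordinal hj))
    (dropR_lift_coords (dropR t) (fibre_coord t)).
  by rewrite /= [X in X = _ -> _]mxE [X in _ = X -> _]mxE.
have -> : j = ord_max by apply: val_inj => /=; have := ltn_ord j; lia.
by rewrite lift_coords_max /fibre_coord addrC subrK.
Qed.

Lemma coordsZ a y : coords (a *: y) = a *: coords y. Proof. by rewrite /coords scalemxAl. Qed.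
Lemma coordsB y y' : coords (y - y') = coords y - coords y'. Proof. by rewrite /coords mulmxBl. Qed.

Lemma fibre_coordB t t' : fibre_coord (t - t') = fibre_coord t - fibre_coord t'.
Proof. by rewrite /fibre_coord dropRB coordsB mulmxBl !mxE; lra. Qed.

Lemma fibre_coordZ a t : fibre_coord (a *: t) = a * fibre_coord t.
Proof. by rewrite /fibre_coord dropRZ coordsZ -scalemxAl !mxE; lra. Qed.

Lemma lift_coordsB y a y' a' :
  lift_coords y a - lift_coords y' a' = lift_coords (y - y') (a - a').
Proof.
rewrite /lift_coords coordsB mulmxBl scalerBl.
by set X := elast R k; set A := coords y *m _; set B := coords y' *m _; rewrite opprD addrACA.
Qed.

Lemma fibre_coord_elast : fibre_coord (elast R k) = 1.
Proof.
have -> : elast R k = lift_coords 0 1.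
  by rewrite /lift_coords /coords !mul0mx add0r scale1r.
exact: fibre_coord_lift.
Qed.

Lemma coords_toR w : coords (toR R w) = toR R (w *m C).
Proof. by rewrite /coords /toR map_mxM. Qed.

Lemma integers_coords_lattice z i : integers R (coords (toR R z) 0 i).
Proof. by rewrite coords_toR mxE; eexists. Qed.

Lemma integers_fibre_coord_lattice z : integers R (fibre_coord (toR R z)).
Proof.
rewrite /fibre_coord dropR_toR coords_toR /toR -map_mxM.
by exists (z 0 ord_max - ((vtil z *m C) *m Vs) 0 ord_max); rewrite intrB !mxE.
Qed.

Lemma coords_vtil i : coords (toR R (vtil (v (s i)))) = row i 1%:M.
Proof.
have -> : toR R (vtil (v (s i))) = row i (intmx Bs) by apply/matrixP => a b; rewrite !mxE.
by rewrite /coords -row_mul intmx_BC.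
Qed.

Lemma fibre_coord_v i : fibre_coord (toR R (v (s i))) = 0.
Proof.
by rewrite /fibre_coord dropR_toR coords_vtil -row_mul mul1mx !mxE subrr.
Qed.

Lemma coords_continuous i : continuous (fun y : 'rV[R]_k => coords y 0 i).
Proof.
rewrite /coords; under eq_fun do rewrite mxE.
apply: sum_continuous => l y; apply: continuousM; [exact: coord_continuous|exact: cst_continuous].
Qed.

Lemma fibre_coord_continuous : continuous fibre_coord.
Proof.
have cd i : continuous (fun t : 'rV[R]_k.+1 => coords (dropR t) 0 i).
  exact: (@comp_continuous _ _ _ (@dropR R k) (fun y => coords y 0 i)
    (@dropR_continuous R k) (@coords_continuous i)).
have cV : continuous (fun t : 'rV[R]_k.+1 => (coords (dropR t) *m intmx Vs) 0 ord_max).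
  have -> : (fun t : 'rV[R]_k.+1 => (coords (dropR t) *m intmx Vs) 0 ord_max) =
      (fun t => \sum_l coords (dropR t) 0 l * intmx Vs l ord_max).
    by apply/funext => t; rewrite mxE.
  by apply: sum_continuous => l y; apply: continuousM; [exact: cd|exact: cst_continuous].
by move=> t; apply: continuousB; [exact: coord_continuous|exact: cV].
Qed.

Lemma lift_coords_continuous :
  continuous (fun z : ('rV[R]_k * R)%type => lift_coords z.1 z.2).
Proof.
have cV : continuous (fun y : 'rV[R]_k => coords y *m intmx Vs).
  apply: continuous_mx => i j; rewrite [i]ord1; under eq_fun do rewrite mxE.
  apply: sum_continuous => l y.
  by apply: continuousM; [exact: coords_continuous|exact: cst_continuous].
move=> z; apply: (@continuousD _ _ _ (fun z : ('rV[R]_k * R)%type => coords z.1 *m intmx Vs)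
   (fun z => z.2 *: elast R k)).
  exact: (@comp_continuous _ _ _ fst _ (@fst_continuous _ _) cV).
by apply: continuousZr_tmp; exact: snd_continuous.
Qed.

Variable J : set 'I_m.
Hypothesis J_enum : forall j, J j -> exists i, s i = j.

Definition integral_coords (y : 'rV[R]_k) :=
  forall i, ~ J (s i) -> integers R (coords y 0 i).

Lemma closed_integral_coords : closed integral_coords.
Proof.
have -> : integral_coords = \bigcap_(i in [set i | ~ J (s i)])
    ((fun y => coords y 0 i) @^-1` integers R).
  by apply/seteqP; split => y h.
apply: closed_bigI => i _; apply: preimage_closed; last exact: closed_integers.
by move=> t _; exact: coords_continuous.
Qed.

(* The fibre coordinate is integral on G_p, hence well defined modulo Z on M. *)
Lemma gcs_integral_coords :
  gen_closed_subgroup R v J `<=`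
  [set t | integral_coords (dropR t) /\ integers R (fibre_coord t)].
Proof.
have integral_lattice z :
    integral_coords (dropR (toR R z)) /\ integers R (fibre_coord (toR R z)).
  split; last exact: integers_fibre_coord_lattice.
  by move=> i _; rewrite dropR_toR; exact: integers_coords_lattice.
apply: gcs_min => [||z|].
- apply: closedI.
    by apply: preimage_closed; [move=> t _; exact: dropR_continuous|exact: closed_integral_coords].
  by apply: preimage_closed; [move=> t _; exact: fibre_coord_continuous|exact: closed_integers].
- split; first by rewrite -(toR0 R k.+1); exact: integral_lattice.
  move=> a b [ha1 ha2] [hb1 hb2]; split; last by rewrite fibre_coordB; exact: integersB.
  by move=> i hi; rewrite dropRB coordsB entryB; apply: integersB; [exact: ha1|exact: hb1].
- exact: integral_lattice.
- move=> j a Jj; have [i0 e] := J_enum Jj; subst j; split; last first.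
    by rewrite fibre_coordZ fibre_coord_v mulr0; exact: integers0.
  move=> i hi; rewrite dropRZ dropR_toR coordsZ coords_vtil !mxE.
  have [e|ne] := eqVneq i0 i; first by case: hi; rewrite -e.
  by rewrite mulr0; exact: integers0.
Qed.

Lemma gcs_vtil_integral_coords :
  gen_closed_subgroup R (fun i => vtil (v i)) J `<=` integral_coords.
Proof.
apply: gcs_min; first exact: closed_integral_coords.
- split; first by rewrite -(toR0 R k) => i _; exact: integers_coords_lattice.
  by move=> a b ha hb i hi; rewrite coordsB entryB; apply: integersB; [exact: ha|exact: hb].
- by move=> z i _; exact: integers_coords_lattice.
- move=> j a Jj; have [i0 e] := J_enum Jj; subst j.
  move=> i hi; rewrite coordsZ coords_vtil !mxE.
  have [e|ne] := eqVneq i0 i; first by case: hi; rewrite -e.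
  by rewrite mulr0; exact: integers0.
Qed.

Lemma gcs_lift_coords y a : integral_coords y -> integers R a ->
  gen_closed_subgroup R v J (lift_coords y a).
Proof.
move=> hy [z ->]; rewrite /lift_coords; apply: gcsD.
  rewrite mulmx_sum_row; apply: (big_ind (gen_closed_subgroup R v J)).
  - exact: gcs0.
  - by move=> t t'; apply: gcsD.
  move=> i _; have -> : row i (intmx Vs) = toR R (v (s i)).
    by apply/matrixP => i1 j1; rewrite ord1 !mxE.
  have [Ji|nJi] := pselect (J (s i)); first exact: gcs_line.
  by have [w ->] := hy i nJi; rewrite -toRZ; exact: gcs_lattice.
by rewrite elast_toR -toRZ; exact: gcs_lattice.
Qed.
End vertex_coordinates.

Lemma quotient_map_circleX (R : realType) (Y B : topologicalType) (q : Y -> B) :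
  quotient_map q -> (forall b, exists y, q y = b) ->
  quotient_map (fun z : R * Y => (cls (@Zrel1 R) z.1, q z.2)).
Proof.
move=> qq qs.
have qc : quotient_map (fun z : R * B => (cls (@Zrel1 R) z.1, z.2)).
  apply: quotient_map_open_surj; first exact: open_mapX (@open_map_circle R) (@open_map_id _).
  by move=> [g b]; exists (crepr g, b); rewrite /= cls_crepr.
exact: (quotient_map_comp (@quotient_map_idX R _ _ _ qq qs) qc).
Qed.

Lemma quotient_map_Xcircle (R : realType) (Y B : topologicalType) (q : Y -> B) :
  quotient_map q -> (forall b, exists y, q y = b) ->
  quotient_map (fun z : Y * R => (q z.1, cls (@Zrel1 R) z.2)).
Proof.
move=> qq qs.
have qc : quotient_map (fun z : B * R => (z.1, cls (@Zrel1 R) z.2)).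
  apply: quotient_map_open_surj; first exact: open_mapX (@open_map_id _) (@open_map_circle R).
  by move=> [b g]; exists (b, crepr g); rewrite /= cls_crepr.
exact: (quotient_map_comp (@quotient_map_Xid R _ _ _ qq qs) qc).
Qed.

Section stabiliser_relation.
Variables (R : realType) (n m : nat) (w : 'I_m -> 'rV[int]_n).
Variables (P : Type) (I : P -> set 'I_m).
Local Notation G p := (gen_closed_subgroup R w (I p)).

Definition stab_rel (x y : (torus R n * P)%type) :=
  x.2 = y.2 /\ G x.2 (crepr y.1 - crepr x.1).

Lemma stab_rel_refl x : stab_rel x x.
Proof. by split => //; rewrite subrr; exact: gcs0. Qed.

Lemma stab_rel_sym x y : stab_rel x y -> stab_rel y x.
Proof. by case=> e h; split => //; rewrite -e -opprB; apply: gcsN. Qed.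

Lemma stab_rel_trans x y z : stab_rel x y -> stab_rel y z -> stab_rel x z.
Proof.
case=> e1 h1 [e2 h2]; split; first by rewrite e1.
rewrite -[crepr z.1](subrK (crepr y.1)) -addrA.
by apply: gcsD => //; rewrite e1.
Qed.

Local Notation cls_stab u p := (cls stab_rel (cls (@Zrel R n) u, p)).

Lemma eq_cls_stab a b p : G p (b - a) -> cls_stab a p = cls_stab b p.
Proof.
move=> h; apply: eq_cls; [exact: stab_rel_sym|exact: stab_rel_trans|split => //=].
have [z1 ->] := crepr_cls_torus a; have [z2 ->] := crepr_cls_torus b.
have -> : b + toR R z2 - (a + toR R z1) = (b - a) + toR R (z2 - z1).
  by rewrite toRB; set B := toR R z2; set A := toR R z1; rewrite opprD addrACA.
by apply: gcsD => //; exact: gcs_lattice.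
Qed.

Lemma crepr_cls_stab a p :
  (crepr (cls_stab a p)).2 = p /\ G p (crepr (crepr (cls_stab a p)).1 - a).
Proof.
have [/= e h] := rel_crepr_cls stab_rel_refl (cls (@Zrel R n) a, p).
split; first by rewrite -e.
have [z hz] := crepr_cls_torus a; move: h; rewrite hz => h.
have -> : crepr (crepr (cls_stab a p)).1 - a =
    crepr (crepr (cls_stab a p)).1 - (a + toR R z) + toR R z.
  by rewrite opprD addrA subrK.
by apply: gcsD => //; exact: gcs_lattice.
Qed.

Lemma cls_stab_surj x : exists w, cls_stab w.1 w.2 = x.
Proof.
exists (crepr (crepr x).1, (crepr x).2).
by rewrite /= cls_crepr -[in RHS](cls_crepr x); case: (crepr x).
Qed.
End stabiliser_relation.

Section contact_manifold.
Variables (R : realType) (k m : nat) (v : 'I_m -> 'rV[int]_k.+1).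

Definition facets_at (p : PT R v) : set 'I_m := [set i | facetP R v i (set_val p)].

Local Notation GM p := (gen_closed_subgroup R v (facets_at p)).
Local Notation GN p := (gen_closed_subgroup R (fun i => vtil (v i)) (facets_at p)).
Local Notation c1 := (cls (@Zrel1 R)).
Local Notation E := (elast R k).

Definition clsM (w : ('rV[R]_k.+1 * PT R v)%type) : Mspace R v :=
  cls (Delta R v) (cls (@Zrel R k.+1) w.1, w.2).

Definition clsN (w : ('rV[R]_k * PT R v)%type) : Nspace R v :=
  cls (Deltatil R v) (cls (@Zrel R k) w.1, w.2).

(* [Delta R v] and [Deltatil R v] are [stab_rel] for the normals v and ~v. *)
Lemma clsM_eq u u' p : GM p (u' - u) -> clsM (u, p) = clsM (u', p).
Proof. exact: (@eq_cls_stab _ _ _ v _ facets_at). Qed.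

Lemma clsN_eq y y' p : GN p (y' - y) -> clsN (y, p) = clsN (y', p).
Proof. exact: (@eq_cls_stab _ _ _ (fun i => vtil (v i)) _ facets_at). Qed.

Lemma crepr_clsM u p :
  (crepr (clsM (u, p))).2 = p /\ GM p (crepr (crepr (clsM (u, p))).1 - u).
Proof. exact: (@crepr_cls_stab _ _ _ v _ facets_at). Qed.

Lemma crepr_clsN y p :
  (crepr (clsN (y, p))).2 = p /\ GN p (crepr (crepr (clsN (y, p))).1 - y).
Proof. exact: (@crepr_cls_stab _ _ _ (fun i => vtil (v i)) _ facets_at). Qed.

Lemma clsM_surj x : exists w, clsM w = x.
Proof. exact: (@cls_stab_surj _ _ _ v _ facets_at). Qed.

Lemma clsN_surj b : exists w, clsN w = b.
Proof. exact: (@cls_stab_surj _ _ _ (fun i => vtil (v i)) _ facets_at). Qed.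

Lemma circle_act_clsM (a : R) u p : circle_act (c1 a) (clsM (u, p)) = clsM (u + a *: E, p).
Proof.
have [e2 h] := crepr_clsM u p.
change (clsM (crepr (crepr (clsM (u, p))).1 + crepr (c1 a) *: E, (crepr (clsM (u, p))).2)
   = clsM (u + a *: E, p)).
rewrite e2; apply: clsM_eq; have [z ->] := crepr_cls_circle a.
set A := crepr (crepr (clsM (u, p))).1 in h *.
have -> : u + a *: E - (A + (a + z%:~R) *: E) = - (A - u) - z%:~R *: E.
  by apply/matrixP => i j; rewrite !mxE; ring.
by apply: gcsB; [exact: gcsN|rewrite elast_toR -toRZ; exact: gcs_lattice].
Qed.

Lemma dproj_clsM u p : dproj (clsM (u, p)) = clsN (dropR u, p).
Proof.
have [e2 h] := crepr_clsM u p.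
change (clsN (dropR (crepr (crepr (clsM (u, p))).1), (crepr (clsM (u, p))).2)
  = clsN (dropR u, p)).
by rewrite e2; apply: clsN_eq; rewrite -dropRB -opprB; apply: gcs_dropR; exact: gcsN.
Qed.

Lemma quotient_map_clsM : quotient_map clsM.
Proof.
have q1 : quotient_map (fun w : ('rV[R]_k.+1 * PT R v)%type => (cls (@Zrel R k.+1) w.1, w.2)).
  apply: quotient_map_open_surj; first exact: open_mapX (@open_map_torus R k.+1) (@open_map_id _).
  by move=> [a p]; exists (crepr a, p); rewrite /= cls_crepr.
exact: (quotient_map_comp q1 (@quotient_map_cls _ (Delta R v))).
Qed.

Lemma quotient_map_clsN : quotient_map clsN.
Proof.
have q1 : quotient_map (fun w : ('rV[R]_k * PT R v)%type => (cls (@Zrel R k) w.1, w.2)).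
  apply: quotient_map_open_surj; first exact: open_mapX (@open_map_torus R k) (@open_map_id _).
  by move=> [a p]; exists (crepr a, p); rewrite /= cls_crepr.
exact: (quotient_map_comp q1 (@quotient_map_cls _ (Deltatil R v))).
Qed.

Lemma clsM_continuous : continuous clsM.
Proof.
apply: (@comp_continuous _ _ _ (fun w : ('rV[R]_k.+1 * PT R v)%type =>
  (cls (@Zrel R k.+1) w.1, w.2)) (cls (Delta R v))); last exact: cls_continuous.
apply: pair_continuous; last exact: snd_continuous.
exact: (comp_continuous (@fst_continuous _ _) (@cls_continuous _ _)).
Qed.

Lemma clsN_continuous : continuous clsN.
Proof.
apply: (@comp_continuous _ _ _ (fun w : ('rV[R]_k * PT R v)%type =>
  (cls (@Zrel R k) w.1, w.2)) (cls (Deltatil R v))); last exact: cls_continuous.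
apply: pair_continuous; last exact: snd_continuous.
exact: (comp_continuous (@fst_continuous _ _) (@cls_continuous _ _)).
Qed.

Lemma circle_act_continuous :
  continuous (fun gx : (circle R * Mspace R v)%type => circle_act gx.1 gx.2).
Proof.
apply: (@continuous_quotient _ _ _ _
  (fun gx : (circle R * Mspace R v)%type => circle_act gx.1 gx.2)
  (fun z : (R * ('rV[R]_k.+1 * PT R v))%type => clsM (z.2.1 + z.1 *: E, z.2.2))
  (@quotient_map_circleX R _ _ _ quotient_map_clsM clsM_surj)); last first.
  by move=> [a [u p]]; rewrite /= circle_act_clsM.
apply: (comp_continuous _ clsM_continuous); apply: pair_continuous; last first.
  exact: (comp_continuous (@snd_continuous _ _) (@snd_continuous _ _)).
move=> z; apply: (@continuousD _ _ _ (fun z : (R * ('rV[R]_k.+1 * PT R v))%type => z.2.1)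
   (fun z => z.1 *: E)).
  exact: (comp_continuous (@snd_continuous _ _) (@fst_continuous _ _)).
by apply: continuousZr_tmp; exact: fst_continuous.
Qed.

Lemma dproj_continuous : continuous (@dproj R k m v).
Proof.
apply: (@continuous_quotient _ _ _ clsM (@dproj R k m v)
  (fun w => clsN (dropR w.1, w.2)) quotient_map_clsM); last by move=> [u p]; rewrite dproj_clsM.
apply: (comp_continuous _ clsN_continuous); apply: pair_continuous; last exact: snd_continuous.
exact: (comp_continuous (@fst_continuous _ _) (@dropR_continuous R k)).
Qed.

Lemma circle_act0 (x : Mspace R v) : circle_act (czero R) x = x.
Proof. by have [[u p] <-] := clsM_surj x; rewrite /czero circle_act_clsM scale0r addr0. Qed.

Lemma circle_actD g h (x : Mspace R v) : circle_act (cadd g h) x = circle_act g (circle_act h x).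
Proof.
have [[u p] <-] := clsM_surj x; have [a <-] := cls_surj g; have [b <-] := cls_surj h.
rewrite cadd_cls !circle_act_clsM; congr clsM; congr pair.
by apply/matrixP => i j; rewrite !mxE; ring.
Qed.

Lemma dproj_circle_act g (x : Mspace R v) : dproj (circle_act g x) = dproj x.
Proof.
have [[u p] <-] := clsM_surj x; have [a <-] := cls_surj g.
by rewrite circle_act_clsM !dproj_clsM dropRD dropRZ dropR_elast scaler0 addr0.
Qed.

Lemma open_facets_within (S : {set 'I_m}) :
  open [set p : PT R v | forall j, facetP R v j (set_val p) -> j \in S].
Proof.
rewrite openE => p Sp.
apply: (@filter_forall _ _ (fun j (p' : PT R v) => facetP R v j (set_val p') -> j \in S)
  (nbhs p) _) => j.
have [jS|njS] := boolP (j \in S); first exact: nearW.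
pose f (p' : PT R v) := ipR (set_val p') (toR R (vtil (v j))).
have cf : continuous f.
  by move=> x; apply: (continuous_comp (@initial_continuous _ _ _ x) (@ipR_continuous R k _ _)).
have fp : f p != - ((v j 0 ord_max)%:~R).
  apply/eqP => e; have := Sp j (conj (set_valP p) e); exact/negP.
have near_fp : \forall p' \near p, f p' != - ((v j 0 ord_max)%:~R).
  have nb : nbhs (f p) [set x | x != - ((v j 0 ord_max)%:~R)].
    by apply: open_nbhs_nbhs; split; [exact: open_neq|exact: fp].
  exact: cf p _ nb.
by apply: filterS near_fp => p' h [_ e]; move: h; rewrite /f e eqxx.
Qed.

Definition base_within (S : {set 'I_m}) : set (Nspace R v) :=
  [set b | forall j, facetP R v j (set_val (crepr b).2) -> j \in S].

Lemma base_within_clsN S y p :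
  base_within S (clsN (y, p)) <-> forall j, facetP R v j (set_val p) -> j \in S.
Proof. by rewrite /base_within /=; have [-> _] := crepr_clsN y p. Qed.

Lemma open_base_within S : open (base_within S).
Proof.
apply: quotient_map_clsN.
have -> : clsN @^-1` base_within S =
    (@snd _ _) @^-1` [set p | forall j, facetP R v j (set_val p) -> j \in S].
  by apply/seteqP; split => -[y p] /=; rewrite base_within_clsN.
by apply: (continuousP _).1; [exact: snd_continuous|exact: open_facets_within].
Qed.
End contact_manifold.

Section trivialization.
Variables (R : realType) (k m : nat) (v : 'I_m -> 'rV[int]_k.+1).
Variables (s : 'I_k -> 'I_m) (C : 'M[int]_k) (S : {set 'I_m}).
Hypothesis hC : C *m (\matrix_(i, j) vtil (v (s i)) 0 j) = 1%:M.
Hypothesis s_enum : forall j, j \in S -> exists i, s i = j.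

Local Notation c1 := (cls (@Zrel1 R)).
Local Notation clsM := (@clsM R k m v).
Local Notation clsN := (@clsN R k m v).
Local Notation U := (@base_within R k m v S).

Definition triv_phi (x : Mspace R v) : (Nspace R v * circle R)%type :=
  (dproj x, c1 (fibre_coord v s C (crepr (crepr x).1))).

Definition triv_psi (z : (Nspace R v * circle R)%type) : Mspace R v :=
  clsM (lift_coords v s C (crepr (crepr z.1).1) (crepr z.2), (crepr z.1).2).

Let facets_enum y p : U (clsN (y, p)) -> forall j, facets_at p j -> exists i, s i = j.
Proof. by move=> /base_within_clsN Up j /Up /s_enum. Qed.

Lemma triv_phi_clsM u p : U (clsN (dropR u, p)) ->
  triv_phi (clsM (u, p)) = (clsN (dropR u, p), c1 (fibre_coord v s C u)).
Proof.
move=> Up; rewrite /triv_phi dproj_clsM; congr pair.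
have [_ h] := crepr_clsM u p.
have [_ h2] := gcs_integral_coords hC (facets_enum Up) h.
by symmetry; apply: eq_cls_circle; rewrite -fibre_coordB.
Qed.

Lemma triv_psi_clsN y p a : U (clsN (y, p)) ->
  triv_psi (clsN (y, p), c1 a) = clsM (lift_coords v s C y a, p).
Proof.
move=> Up; rewrite /triv_psi /=.
have [-> h] := crepr_clsN y p; have [z ->] := crepr_cls_circle a.
apply: clsM_eq; rewrite lift_coordsB; apply: gcs_lift_coords.
  by apply: (gcs_vtil_integral_coords hC (facets_enum Up)); rewrite -opprB; exact: gcsN.
by exists (- z); rewrite intrN opprD addrA subrr add0r.
Qed.

Lemma triv_phi_continuous : {within (@dproj R k m v) @^-1` U, continuous triv_phi}.
Proof.
apply: (@continuous_within_quotient _ _ _ clsM triv_phi _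
  (fun w => (clsN (dropR w.1, w.2), c1 (fibre_coord v s C w.1)))
  (@quotient_map_clsM R k m v) (@clsM_continuous R k m v)).
- by apply: (continuousP _).1; [exact: dproj_continuous|exact: open_base_within].
- apply: pair_continuous.
    apply: (comp_continuous _ (@clsN_continuous R k m v)).
    apply: pair_continuous; last exact: snd_continuous.
    exact: (comp_continuous (@fst_continuous _ _) (@dropR_continuous R k)).
  exact: (comp_continuous (@fst_continuous _ _)
    (comp_continuous (@fibre_coord_continuous R k m v s C) (@cls_continuous _ (@Zrel1 R)))).
- by move=> [u p]; rewrite /= dproj_clsM => Up; rewrite triv_phi_clsM.
Qed.

Lemma triv_psi_continuous : {within U `*` setT, continuous triv_psi}.
Proof.
apply: (@continuous_within_quotient _ _ _ (fun w => (clsN w.1, c1 w.2)) triv_psi _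
  (fun w : (('rV[R]_k * PT R v) * R)%type => clsM (lift_coords v s C w.1.1 w.2, w.1.2))
  (@quotient_map_Xcircle R _ _ _ (@quotient_map_clsN R k m v) (@clsN_surj R k m v))).
- apply: pair_continuous.
    exact: (comp_continuous (@fst_continuous _ _) (@clsN_continuous R k m v)).
  exact: (comp_continuous (@snd_continuous _ _) (@cls_continuous _ _)).
- have -> : U `*` setT = (@fst _ (circle R)) @^-1` U.
    by apply/seteqP; split => -[b g] //= [].
  by apply: (continuousP _).1; [exact: fst_continuous|exact: open_base_within].
- apply: (comp_continuous _ (@clsM_continuous R k m v)); apply: pair_continuous.
    apply: (@comp_continuous _ _ _ (fun w : (('rV[R]_k * PT R v) * R)%type => (w.1.1, w.2))
      (fun z : ('rV[R]_k * R)%type => lift_coords v s C z.1 z.2) _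
      (@lift_coords_continuous R k m v s C)).
    apply: pair_continuous; last exact: snd_continuous.
    exact: (comp_continuous (@fst_continuous _ _) (@fst_continuous _ _)).
  exact: (comp_continuous (@fst_continuous _ _) (@snd_continuous _ _)).
- by move=> [[y p] a] [/= Up _]; rewrite triv_psi_clsN.
Qed.

Lemma triv_phi_spec (x : Mspace R v) : U (dproj x) ->
  (triv_phi x).1 = dproj x /\ triv_psi (triv_phi x) = x /\
  forall g, triv_phi (circle_act g x) = ((triv_phi x).1, cadd g (triv_phi x).2).
Proof.
have [[u p] <-] := clsM_surj x; rewrite dproj_clsM => Up.
rewrite triv_phi_clsM //; split=> //; split; first by rewrite triv_psi_clsN // (lift_coordsE hC).
move=> g; have [a <-] := cls_surj g.
rewrite circle_act_clsM triv_phi_clsM; last first.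
  by rewrite dropRD dropRZ dropR_elast scaler0 addr0.
rewrite /= cadd_cls dropRD dropRZ dropR_elast scaler0 addr0; congr (_, _).
apply: eq_cls_circle; exists 0.
have -> : u + a *: elast R k = u - (- a) *: elast R k by rewrite scaleNr opprK.
by rewrite fibre_coordB fibre_coordZ (fibre_coord_elast R hC) mulr1 /=; lra.
Qed.

Lemma triv_psi_spec z : U z.1 -> dproj (triv_psi z) = z.1 /\ triv_phi (triv_psi z) = z.
Proof.
case: z => b g /=; have [[y p] <-] := clsN_surj b; have [a <-] := cls_surj g => Up.
rewrite triv_psi_clsN // dproj_clsM (dropR_lift_coords hC); split => //.
by rewrite triv_phi_clsM (dropR_lift_coords hC) // (fibre_coord_lift hC).
Qed.
End trivialization.

Lemma local_trivialization (R : realType) (k m : nat) (v : 'I_m -> 'rV[int]_k.+1) :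
  delzant R v -> forall b : Nspace R v, exists U : set (Nspace R v), open U /\ U b /\
    exists (phi : Mspace R v -> (Nspace R v * circle R)%type)
           (psi : (Nspace R v * circle R)%type -> Mspace R v),
      {within (@dproj R k m v) @^-1` U, continuous phi} /\
      {within U `*` setT, continuous psi} /\
      (forall x, U (dproj x) ->
         (phi x).1 = dproj x /\ psi (phi x) = x /\
         forall g, phi (circle_act g x) = ((phi x).1, cadd g (phi x).2)) /\
      (forall z, U z.1 -> dproj (psi z) = z.1 /\ phi (psi z) = z).
Proof.
move=> [[B hB] [_ hvert]] b; have [[y p] <-] := clsN_surj b.
have [q [vq hfac]] := exists_vertex_on_facets hB (set_valP p).
have [hcard [_ hspan]] := hvert q vq.
have [s [C [s_enum hC]]] := enum_Zbasis hcard hspan.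
exists (@base_within R k m v [set i | `[< facetP R v i q >]]%SET); split.
  exact: open_base_within.
split; first by apply/base_within_clsN => j /hfac hj; rewrite inE; apply/asboolP.
exists (triv_phi s C), (triv_psi s C); split; first exact: triv_phi_continuous hC s_enum.
split; first exact: triv_psi_continuous hC s_enum.
by split; [exact: triv_phi_spec hC s_enum|exact: triv_psi_spec hC s_enum].
Qed.

Unset Implicit Arguments.
Theorem proposition5p5 (R : realType) (k m : nat) (v : 'I_m -> 'rV[int]_k.+1) :
  (2 <= k)%N ->
  good_cone R v ->
  strictly_convex (cone R v) ->
  (forall x : 'rV[R]_k.+1, cone R v x -> x != 0 -> 0 < x 0 ord_max) ->
  smoothness_criterion R v ->
  principal_bundle (@cadd R) (@czero R) (@circle_act R k m v) (@dproj R k m v).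
Proof.
move=> _ _ _ _ [hdel _].
split; first exact: circle_act_continuous.
split; first exact: circle_act0.
split; first exact: circle_actD.
split; first exact: dproj_continuous.
split.
  move=> b; have [U [_ [Ub [phi [psi [_ [_ [_ hpsi]]]]]]]] := local_trivialization hdel b.
  by exists (psi (b, czero R)); exact: (hpsi (b, czero R) Ub).1.
by split; [exact: dproj_circle_act|exact: local_trivialization].
Qed.
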